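(* There exist absolute positive constants $c,C$ such that the following holds. Let ${\cal J}$ be a finite index set and $X_i$, $i\in{\cal J}$, independent $\{0,1\}$-valued random variables with $P(X_i=1)=p_i$, $\lambda=\sum_{i\in{\cal J}}p_i>0$, $\tilde p=\max_{i\in{\cal J}}p_i$, and $W=\sum_{i\in{\cal J}}X_i$. Let $Y\sim\mathrm{Poi}(\lambda)$. Then for every integer $k\ge\lambda$ with $\tilde p(1+\xi^2)\le c$, where $\xi=(k-\lambda)/\sqrt\lambda$, $$\Big|\frac{P(W\ge k)}{P(Y\ge k)}-1\Big|\le C\tilde p(1+\xi^2).$$
   Context: $\mathrm{Poi}(\lambda)$ is the Poisson distribution with mean $\lambda$. *)

From Stdlib Require Import Reals Lra Lia Arith List.
Open Scope R_scope.

(* The index set J is identified with {0, ..., n-1}; p i = P(X_i = 1). *)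

Fixpoint outcomes (n : nat) : list (list bool) :=
  match n with
  | O => nil :: nil
  | S m => concat (map (fun o => (o ++ true :: nil) :: (o ++ false :: nil) :: nil)
                       (outcomes m))
  end.

(* Probability of an outcome under independence: prod_i p_i^{x_i}(1-p_i)^{1-x_i},
   where the head of the list is index i. *)
Fixpoint outcome_prob (p : nat -> R) (i : nat) (o : list bool) : R :=
  match o with
  | nil => 1
  | b :: o' => (if b then p i else 1 - p i) * outcome_prob p (S i) o'
  end.

Definition count_ones (o : list bool) : nat := length (filter (fun b => b) o).

Definition bernoulli_sum_tail (p : nat -> R) (n k : nat) : R :=
  fold_right Rplus 0
    (map (fun o => if (k <=? count_ones o)%nat then outcome_prob p 0 o else 0)
         (outcomes n)).

Definition lam (p : nat -> R) (n : nat) : R :=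
  fold_right Rplus 0 (map p (seq 0 n)).

(* tilde p = max_{i<n} p_i (p_i >= 0, and n >= 1 whenever lambda > 0) *)
Definition pmax (p : nat -> R) (n : nat) : R :=
  fold_right Rmax 0 (map p (seq 0 n)).

Definition poisson_pmf (l : R) (j : nat) : R := exp (- l) * l ^ j / INR (fact j).

Definition poisson_tail (l : R) (k : nat) : R :=
  match k with
  | O => 1
  | S k' => 1 - sum_f_R0 (poisson_pmf l) k'
  end.

From Stdlib Require Import Reals Lra Lia List ZArith.
Open Scope R_scope.

(* Let W = X_1 + ... + X_n with P(X_i = 1) = p_i, lam = sum p_i, F(k) = P(Poi(lam) >= k).
   - [expect L g] computes E g(W) recursively over the list L of success probabilities;
     it is linear and monotone and agrees with the outcome enumeration of the statement.
   - Stein identity for Bernoulli sums: E[lam g(W+1) - W g(W)] = sum_i p_i^2 E[Dg(W_i+1)],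
     where W_i = W - X_i and Dg(w) = g(w+1) - g(w).
   - Poisson facts: point-mass recursion, Mills-ratio bounds F(j) = O(sqrt lam) p(j) above
     the mean and G(j) = P(Y <= j) = O(sqrt lam) p(j) below it, a lower bound for F near the
     mean, and monotonicity of F in lam.
   - The solution g of lam g(w+1) - w g(w) = 1{w >= k} - F(k): below k its increments are
     -F(k)/lam times an increasing phi; from k on they are O(1/k^2).
   - If P(W' >= m) <= 2 F(m) for lam < m < k, then |E Dg(W'+1)| <= 100 (1 + xi^2) F(k)/lam.
   - Induction on the number of variables: the bound for each W_i provides that tail
     comparison, and Stein's identity gives |P(W >= k)/F(k) - 1| <= 100 pmax (1 + xi^2)
     whenever pmax (1 + xi^2) <= 1/100, i.e. the theorem with c = 1/100 and C = 100. *)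

Fixpoint sumL {A} (f : A -> R) (xs : list A) : R :=
  match xs with nil => 0 | x :: xs' => f x + sumL f xs' end.

Lemma sumL_map : forall A B (f : B -> R) (g : A -> B) xs,
  sumL f (map g xs) = sumL (fun x => f (g x)) xs.
Proof. induction xs; simpl; auto. rewrite IHxs; auto. Qed.

Lemma sumL_ext_in : forall A (f g : A -> R) xs,
  (forall x, In x xs -> f x = g x) -> sumL f xs = sumL g xs.
Proof.
  induction xs; intros H; simpl; auto.
  rewrite H, IHxs; simpl; auto. intros; apply H; simpl; auto.
Qed.

Lemma sumL_lin : forall A (f g : A -> R) a b xs,
  sumL (fun x => a * f x + b * g x) xs = a * sumL f xs + b * sumL g xs.
Proof. induction xs; simpl; [ring|]. rewrite IHxs; ring. Qed.

Lemma sumL_sub : forall A (f g : A -> R) xs, sumL (fun x => f x - g x) xs = sumL f xs - sumL g xs.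
Proof. induction xs; simpl; [ring|]. rewrite IHxs; ring. Qed.

Lemma sumL_le_in : forall A (f g : A -> R) xs,
  (forall x, In x xs -> f x <= g x) -> sumL f xs <= sumL g xs.
Proof.
  induction xs; intros H; simpl; [lra|].
  pose proof (H a (or_introl eq_refl)).
  assert (sumL f xs <= sumL g xs) by (apply IHxs; intros; apply H; simpl; auto). lra.
Qed.

Lemma sumL_abs : forall A (f : A -> R) xs, Rabs (sumL f xs) <= sumL (fun x => Rabs (f x)) xs.
Proof.
  induction xs; simpl; [rewrite Rabs_R0; lra|].
  eapply Rle_trans; [apply Rabs_triang|]. lra.
Qed.

Lemma sumL_app : forall A (f : A -> R) xs ys, sumL f (xs ++ ys) = sumL f xs + sumL f ys.
Proof. induction xs; intros; simpl; [ring|]. rewrite IHxs; ring. Qed.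

Lemma sumL_concat : forall A (f : A -> R) xss, sumL f (concat xss) = sumL (sumL f) xss.
Proof. induction xss; simpl; auto. rewrite sumL_app, IHxss; auto. Qed.

Lemma fold_right_sumL : forall A (f : A -> R) xs, fold_right Rplus 0 (map f xs) = sumL f xs.
Proof. induction xs; simpl; auto. rewrite IHxs; auto. Qed.

Lemma sumL_telescope : forall (a : nat -> R) j n,
  sumL (fun m => a (S m) - a m) (seq j n) = a (j + n)%nat - a j.
Proof.
  intros a j n. revert j. induction n; intros j; simpl.
  - rewrite Nat.add_0_r; ring.
  - rewrite IHn. replace (S j + n)%nat with (j + S n)%nat by lia. ring.
Qed.

Lemma sumL_nonneg : forall A (f : A -> R) xs, (forall x, In x xs -> 0 <= f x) -> 0 <= sumL f xs.
Proof.
  induction xs; intros H; simpl; [lra|]. pose proof (H a (or_introl eq_refl)).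
  assert (0 <= sumL f xs) by (apply IHxs; intros; apply H; simpl; auto). lra.
Qed.

Lemma sumL_const_le : forall A (f : A -> R) xs c,
  (forall x, In x xs -> f x <= c) -> sumL f xs <= INR (length xs) * c.
Proof.
  induction xs; intros c H; [simpl; lra|]. cbn [sumL length]. pose proof (H a (or_introl eq_refl)).
  assert (sumL f xs <= INR (length xs) * c) by (apply IHxs; intros; apply H; simpl; auto).
  rewrite S_INR. lra.
Qed.

(* [expect L g] is E g(W) for W a sum of independent Bernoulli variables whose
   success probabilities are listed in L; the recursion conditions on the first one. *)
Fixpoint expect (L : list R) (g : nat -> R) : R :=
  match L with
  | nil => g O
  | a :: L' => (1 - a) * expect L' g + a * expect L' (fun w => g (S w))
  end.

Definition probs (L : list R) := forall x, In x L -> 0 <= x <= 1.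

Lemma probs_cons : forall a L, probs (a :: L) -> 0 <= a <= 1 /\ probs L.
Proof.
  unfold probs; intros a L H.
  split; [apply H; simpl; auto | intros x Hx; apply H; simpl; auto].
Qed.

Lemma expect_ext : forall L g h, (forall w, g w = h w) -> expect L g = expect L h.
Proof.
  induction L; intros g h H; simpl; auto.
  rewrite (IHL g h H), (IHL (fun w => g (S w)) (fun w => h (S w))); auto.
Qed.

Lemma expect_lin : forall L g h a b,
  expect L (fun w => a * g w + b * h w) = a * expect L g + b * expect L h.
Proof.
  induction L; intros g h x y; simpl; auto.
  rewrite IHL, (IHL (fun w => g (S w)) (fun w => h (S w))). ring.
Qed.

Lemma expect_const : forall L c, expect L (fun _ => c) = c.
Proof. induction L; intros c; simpl; auto. rewrite !IHL. ring. Qed.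

Lemma expect_mono : forall L g h, probs L -> (forall w, g w <= h w) -> expect L g <= expect L h.
Proof.
  induction L; intros g h HL H; simpl; auto.
  destruct (probs_cons _ _ HL) as [Ha HL'].
  pose proof (IHL g h HL' H).
  pose proof (IHL (fun w => g (S w)) (fun w => h (S w)) HL' (fun w => H (S w))).
  nra.
Qed.

Lemma expect_bounds : forall L g lo hi, probs L -> (forall w, lo <= g w <= hi) ->
  lo <= expect L g <= hi.
Proof.
  intros L g lo hi HL H. split.
  - rewrite <- (expect_const L lo). apply expect_mono; auto. apply H.
  - rewrite <- (expect_const L hi). apply expect_mono; auto. apply H.
Qed.

Lemma expect_all_zero : forall L g, (forall x, In x L -> x = 0) -> expect L g = g O.
Proof.
  induction L; intros g H; simpl; auto.
  rewrite (H a (or_introl eq_refl)), IHL; [ring|].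
  intros; apply H; simpl; auto.
Qed.

Lemma expect_sumL : forall A L (c : A -> R) (u : A -> nat -> R) xs,
  expect L (fun w => sumL (fun m => c m * u m w) xs) = sumL (fun m => c m * expect L (u m)) xs.
Proof.
  induction xs; simpl.
  - apply expect_const.
  - rewrite (expect_ext L _ (fun w => c a * u a w + 1 * sumL (fun m => c m * u m w) xs))
      by (intros; ring).
    rewrite expect_lin, IHxs; ring.
Qed.

Lemma expect_snoc : forall L a g,
  expect (L ++ a :: nil) g = expect L (fun w => (1 - a) * g w + a * g (S w)).
Proof. induction L; intros b g; simpl; auto. rewrite !IHL. reflexivity. Qed.

Definition tail_ind (m w : nat) : R := if (m <=? w)%nat then 1 else 0.

Lemma tail_ind_bounds : forall m w, 0 <= tail_ind m w <= 1.
Proof. intros; unfold tail_ind; destruct (m <=? w)%nat; lra. Qed.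

Lemma expect_tail_ind_bounds : forall L m, probs L -> 0 <= expect L (tail_ind m) <= 1.
Proof. intros. apply expect_bounds; auto. apply tail_ind_bounds. Qed.

Lemma outcomes_length : forall n o, In o (outcomes n) -> length o = n.
Proof.
  induction n; simpl; intros o H.
  - destruct H as [H|H]; [subst; auto | contradiction].
  - apply in_concat in H. destruct H as [l [Hl Ho]].
    apply in_map_iff in Hl. destruct Hl as [o' [Heq Hin]]. subst.
    simpl in Ho. destruct Ho as [H|[H|H]]; try contradiction; subst;
      rewrite length_app; simpl; rewrite (IHn o' Hin); lia.
Qed.

Lemma outcome_prob_snoc : forall p o i b, outcome_prob p i (o ++ b :: nil) =
  outcome_prob p i o * (if b then p (i + length o)%nat else 1 - p (i + length o)%nat).
Proof.
  induction o; intros i b; simpl.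
  - rewrite Nat.add_0_r. ring.
  - rewrite IHo. replace (S i + length o)%nat with (i + S (length o))%nat by lia. ring.
Qed.

Lemma count_ones_snoc : forall o b,
  count_ones (o ++ b :: nil) = (count_ones o + (if b then 1 else 0))%nat.
Proof. intros. unfold count_ones. rewrite filter_app, length_app. destruct b; simpl; auto. Qed.

Lemma outcome_sum_expect : forall p n g,
  sumL (fun o => outcome_prob p 0 o * g (count_ones o)) (outcomes n) = expect (map p (seq 0 n)) g.
Proof.
  intros p n. induction n; intros g.
  - simpl. unfold count_ones; simpl. ring.
  - rewrite seq_S, map_app. simpl map. rewrite expect_snoc, <- IHn.
    simpl outcomes. rewrite sumL_concat, sumL_map.
    apply sumL_ext_in. intros o Ho. pose proof (outcomes_length _ _ Ho) as Hl.
    simpl. rewrite !outcome_prob_snoc, !count_ones_snoc, Hl. simpl.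
    rewrite Nat.add_0_r. replace (count_ones o + 1)%nat with (S (count_ones o)) by lia. ring.
Qed.

Lemma bernoulli_sum_tail_expect : forall p n k,
  bernoulli_sum_tail p n k = expect (map p (seq 0 n)) (tail_ind k).
Proof.
  intros. unfold bernoulli_sum_tail. rewrite fold_right_sumL, <- outcome_sum_expect.
  apply sumL_ext_in. intros o _. unfold tail_ind. destruct (k <=? count_ones o)%nat; ring.
Qed.

Definition lamL (L : list R) := fold_right Rplus 0 L.
Definition pmaxL (L : list R) := fold_right Rmax 0 L.

Lemma pmaxL_nonneg : forall L, 0 <= pmaxL L.
Proof. induction L; unfold pmaxL in *; simpl; [lra|]. eapply Rle_trans; [eauto|apply Rmax_r]. Qed.

Lemma pmaxL_ge : forall L x, In x L -> x <= pmaxL L.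
Proof.
  induction L; intros x H; simpl in H; [contradiction|]. unfold pmaxL; simpl.
  destruct H as [H|H]; [subst; apply Rmax_l|].
  eapply Rle_trans; [apply IHL; auto| apply Rmax_r].
Qed.

Lemma pmaxL_le : forall L X, 0 <= X -> (forall x, In x L -> x <= X) -> pmaxL L <= X.
Proof.
  induction L; intros X H0 H; unfold pmaxL; simpl; [lra|].
  apply Rmax_lub; [apply H; simpl; auto|]. apply IHL; auto. intros; apply H; simpl; auto.
Qed.

Lemma lamL_nonneg : forall L, probs L -> 0 <= lamL L.
Proof.
  induction L; intros HL; unfold lamL; simpl; [lra|].
  destruct (probs_cons _ _ HL) as [Ha HL']. specialize (IHL HL'). unfold lamL in IHL. lra.
Qed.

Lemma lamL_zero : forall L, probs L -> lamL L <= 0 -> forall x, In x L -> x = 0.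
Proof.
  induction L; intros Hok H x Hx; simpl in Hx; [contradiction|].
  destruct (probs_cons _ _ Hok) as [Ha HL]. pose proof (lamL_nonneg L HL).
  unfold lamL in H; simpl in H; fold (lamL L) in H.
  destruct Hx as [Hx|Hx]; [subst; lra|]. apply IHL; auto. lra.
Qed.

(* The pairs (p_i, list with p_i removed), one for each index i. *)
Fixpoint leave_one_out (L : list R) : list (R * list R) :=
  match L with
  | nil => nil
  | a :: L' => (a, L') :: map (fun bl => (fst bl, a :: snd bl)) (leave_one_out L')
  end.

Lemma leave_one_out_spec : forall L b l, In (b, l) (leave_one_out L) ->
  In b L /\ (forall x, In x l -> In x L) /\ lamL l = lamL L - b /\ (length l < length L)%nat.
Proof.
  induction L; intros b l H; simpl in H; [contradiction|].
  destruct H as [H|H].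
  - inversion H; subst. unfold lamL; simpl. repeat split; auto; try lia; try ring.
  - apply in_map_iff in H. destruct H as [[b' l'] [Heq Hin]]. simpl in Heq. inversion Heq; subst.
    destruct (IHL _ _ Hin) as [H1 [H2 [H3 H4]]]. unfold lamL in *; simpl.
    repeat split; simpl; auto.
    + intros x [Hx|Hx]; auto.
    + rewrite H3; ring.
    + lia.
Qed.

Lemma leave_one_out_mean : forall L, sumL fst (leave_one_out L) = lamL L.
Proof.
  induction L; simpl; auto. rewrite sumL_map, (sumL_ext_in _ _ fst); [rewrite IHL; reflexivity|].
  intros; reflexivity.
Qed.

Lemma expect_size_bias : forall L g, expect L (fun w => INR w * g w) =
  sumL (fun bl => fst bl * expect (snd bl) (fun w => g (S w))) (leave_one_out L).
Proof.
  induction L; intros g; [simpl; ring|].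
  cbn [expect leave_one_out sumL fst snd]. rewrite sumL_map; cbn [fst snd].
  rewrite (expect_ext L (fun w => INR (S w) * g (S w)) (fun w => 1 * (INR w * g (S w)) + 1 * g (S w)))
    by (intros; rewrite S_INR; ring).
  rewrite expect_lin, IHL, (IHL (fun w => g (S w))).
  rewrite (sumL_ext_in _
     (fun x => fst x * ((1 - a) * expect (snd x) (fun w => g (S w))
                        + a * expect (snd x) (fun w => g (S (S w)))))
     (fun x => (1 - a) * (fst x * expect (snd x) (fun w => g (S w)))
             + a * (fst x * expect (snd x) (fun w => g (S (S w)))))) by (intros; ring).
  rewrite sumL_lin. ring.
Qed.

Lemma expect_condition : forall L b l h, In (b, l) (leave_one_out L) ->
  expect L h = (1 - b) * expect l h + b * expect l (fun w => h (S w)).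
Proof.
  induction L; intros b l h H; simpl in H; [contradiction|].
  destruct H as [H|H].
  - inversion H; subst. reflexivity.
  - apply in_map_iff in H. destruct H as [[b' l'] [Heq Hin]]. simpl in Heq. inversion Heq; subst.
    simpl. rewrite (IHL _ _ h Hin), (IHL _ _ (fun w => h (S w)) Hin). ring.
Qed.

Lemma stein_identity_bernoulli : forall L g,
  expect L (fun w => lamL L * g (S w) - INR w * g w) =
  sumL (fun bl => fst bl ^ 2 * expect (snd bl) (fun w => g (S (S w)) - g (S w))) (leave_one_out L).
Proof.
  intros L g.
  rewrite (expect_ext L _ (fun w => lamL L * g (S w) + (-1) * (INR w * g w))) by (intros; ring).
  rewrite expect_lin, expect_size_bias, <- leave_one_out_mean.
  assert (Hcond : forall xs, (forall bl, In bl xs -> In bl (leave_one_out L)) ->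
      sumL fst xs * expect L (fun w => g (S w)) =
      sumL (fun bl => fst bl * ((1 - fst bl) * expect (snd bl) (fun w => g (S w))
                                + fst bl * expect (snd bl) (fun w => g (S (S w))))) xs).
  { induction xs as [|[b l] xs IH]; intros Hin; simpl; [ring|].
    rewrite <- IH by (intros; apply Hin; simpl; auto).
    rewrite (expect_condition L b l (fun w => g (S w))) by (apply Hin; simpl; auto). ring. }
  rewrite Hcond by auto.
  match goal with |- ?A + -1 * ?B = _ => replace (A + -1 * B) with (A - B) by ring end.
  rewrite <- sumL_sub.
  apply sumL_ext_in. intros x _.
  rewrite (expect_ext (snd x) (fun w => g (S (S w)) - g (S w))
                      (fun w => 1 * g (S (S w)) + (-1) * g (S w))) by (intros; ring).
  rewrite expect_lin. ring.
Qed.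

Lemma ex_floor : forall x, 0 <= x -> exists n : nat, INR n <= x < INR n + 1.
Proof.
  intros x Hx. destruct (archimed x) as [H1 H2].
  assert (Hup : (1 <= up x)%Z).
  { destruct (Z.lt_ge_cases (up x) 1) as [Hl|Hl]; [|lia].
    assert (up x <= 0)%Z by lia. apply IZR_le in H. simpl in H. lra. }
  exists (Z.to_nat (up x - 1)). rewrite INR_IZR_INZ, Z2Nat.id by lia.
  rewrite minus_IZR. simpl. lra.
Qed.

Lemma Rdiv_le_0_compat : forall a b, 0 <= a -> 0 < b -> 0 <= a / b.
Proof. intros. unfold Rdiv. apply Rmult_le_pos; auto. left; apply Rinv_0_lt_compat; auto. Qed.

Lemma Rdiv_le_1 : forall a b, 0 < b -> a <= b -> a / b <= 1.
Proof. intros. apply Rmult_le_reg_r with b; auto. unfold Rdiv. rewrite Rmult_assoc, Rinv_l; lra. Qed.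

Lemma exp_pow : forall x n, exp x ^ n = exp (INR n * x).
Proof.
  intros x n; induction n; [simpl; rewrite Rmult_0_l, exp_0; auto|].
  simpl pow. rewrite IHn, <- exp_plus. f_equal. rewrite S_INR; ring.
Qed.

Section Poisson.
Variable lam : R.
Hypothesis Hlam : 0 < lam.

Definition pmf j := poisson_pmf lam j.
Definition cdf j := sum_f_R0 (poisson_pmf lam) j.
Definition tail j := poisson_tail lam j.

Lemma pmf_pos : forall j, 0 < pmf j.
Proof.
  intros j. unfold pmf, poisson_pmf. apply Rdiv_lt_0_compat.
  - apply Rmult_lt_0_compat; [apply exp_pos | apply pow_lt; auto].
  - apply lt_0_INR, lt_O_fact.
Qed.

Lemma pmf_succ : forall j, pmf (S j) = pmf j * lam / INR (S j).
Proof.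
  intros j. unfold pmf, poisson_pmf. rewrite fact_simpl, mult_INR. simpl pow.
  assert (0 < INR (fact j)) by apply lt_0_INR, lt_O_fact.
  assert (0 < INR (S j)) by (apply lt_0_INR; lia).
  field. lra.
Qed.

Lemma cdf_succ : forall j, cdf (S j) = cdf j + pmf (S j).
Proof. reflexivity. Qed.

Lemma tail_succ : forall j, tail (S j) = 1 - cdf j.
Proof. reflexivity. Qed.

Lemma tail_rec : forall j, tail j = pmf j + tail (S j).
Proof. intros [|j]; cbn -[sum_f_R0]; unfold pmf; simpl; ring. Qed.

Lemma cdf_exp_series : forall n,
  cdf n = exp (- lam) * sum_f_R0 (fun i => / INR (fact i) * lam ^ i) n.
Proof.
  induction n.
  - unfold cdf, poisson_pmf; simpl. field.
  - rewrite cdf_succ, IHn, tech5, Rmult_plus_distr_l. f_equal.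
    unfold pmf, poisson_pmf. assert (0 < INR (fact (S n))) by apply lt_0_INR, lt_O_fact.
    field. lra.
Qed.

Lemma cdf_cv : Un_cv cdf 1.
Proof.
  destruct (exist_exp lam) as [l Hl] eqn:E.
  assert (Hl' : l = exp lam) by (unfold exp; rewrite E; reflexivity). subst l.
  replace 1 with (exp (- lam) * exp lam)
    by (rewrite <- exp_plus; replace (- lam + lam) with 0 by ring; apply exp_0).
  apply (Un_cv_ext (fun n => exp (- lam) * sum_f_R0 (fun i => / INR (fact i) * lam ^ i) n)).
  - intros; symmetry; apply cdf_exp_series.
  - apply CV_mult; [|exact Hl].
    intros eps Heps. exists O. intros. unfold Rdist. rewrite Rminus_diag, Rabs_R0. lra.
Qed.

Lemma cdf_limit_le : forall j X, (forall n, (j <= n)%nat -> cdf n <= X) -> 1 <= X.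
Proof.
  intros j X H. destruct (Rle_or_lt 1 X) as [|Hlt]; auto.
  destruct (cdf_cv (1 - X)) as [N HN]; [lra|].
  specialize (HN (max N j) (Nat.le_max_l _ _)). specialize (H (max N j) (Nat.le_max_r _ _)).
  unfold Rdist in HN. apply Rabs_def2 in HN. lra.
Qed.

Lemma cdf_growing : Un_growing cdf.
Proof. intros j. rewrite cdf_succ. pose proof (pmf_pos (S j)). lra. Qed.

Lemma cdf_pos : forall j, 0 < cdf j.
Proof. induction j; [apply pmf_pos|]. pose proof (cdf_growing j). lra. Qed.

Lemma cdf_lt1 : forall j, cdf j < 1.
Proof.
  intros j. pose proof (growing_ineq _ _ cdf_growing cdf_cv (S j)).
  rewrite cdf_succ in H. pose proof (pmf_pos (S j)). lra.
Qed.

Lemma tail_pos : forall j, 0 < tail j.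
Proof. intros [|j]; [unfold tail; simpl; lra|]. rewrite tail_succ. pose proof (cdf_lt1 j); lra. Qed.

Lemma tail_le1 : forall j, tail j <= 1.
Proof. intros [|j]; [unfold tail; simpl; lra|]. rewrite tail_succ. pose proof (cdf_pos j); lra. Qed.

Lemma tail_decr : forall j t, tail (j + t) <= tail j.
Proof.
  intros j t; induction t; [rewrite Nat.add_0_r; lra|].
  rewrite Nat.add_succ_r. pose proof (tail_rec (j + t)). pose proof (pmf_pos (j + t)). lra.
Qed.

(* Geometric tail bound: above the mean the point masses decay at least
   geometrically, so F(j+1) <= p(j) lam / (j+1-lam). *)
Lemma tail_geometric_bound : forall j, INR j + 1 > lam ->
  tail (S j) <= pmf j * (lam / (INR j + 1 - lam)).
Proof.
  intros j Hj. set (c := lam / (INR j + 1 - lam)).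
  assert (Hc : 0 <= c) by (unfold c; apply Rdiv_le_0_compat; lra).
  assert (Hratio : forall T, lam / INR (S (j + T)) * (1 + c) <= c).
  { intros T. unfold c. rewrite S_INR, plus_INR.
    pose proof (pos_INR T). pose proof (pos_INR j).
    apply Rmult_le_reg_r with (INR j + INR T + 1); [lra|].
    apply Rmult_le_reg_r with (INR j + 1 - lam); [lra|].
    field_simplify; try lra; try nra. }
  assert (Hpartial : forall T, cdf (j + T) - cdf j <= c * (pmf j - pmf (j + T))).
  { induction T; [rewrite Nat.add_0_r; lra|].
    rewrite Nat.add_succ_r, cdf_succ, pmf_succ.
    pose proof (Hratio T). pose proof (pmf_pos (j + T)).
    assert (0 < INR (S (j + T))) by (apply lt_0_INR; lia).
    assert (pmf (j + T) * lam / INR (S (j + T)) * (1 + c) <= c * pmf (j + T)).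
    { replace (pmf (j + T) * lam / INR (S (j + T)) * (1 + c))
        with (pmf (j + T) * (lam / INR (S (j + T)) * (1 + c))) by (field; lra).
      nra. }
    nra. }
  rewrite tail_succ.
  assert (1 <= cdf j + c * pmf j); [|lra].
  apply (cdf_limit_le j). intros n Hn. replace n with (j + (n - j))%nat by lia.
  pose proof (Hpartial (n - j)%nat). pose proof (pmf_pos (j + (n - j))). nra.
Qed.

Definition tail_ratio j := tail j / pmf j.

Lemma tail_ratio_rec : forall j, tail_ratio j = 1 + tail_ratio (S j) * (lam / INR (S j)).
Proof.
  intros j. unfold tail_ratio. rewrite (tail_rec j), pmf_succ. pose proof (pmf_pos j).
  assert (0 < INR (S j)) by (apply lt_0_INR; lia). field. repeat split; lra.
Qed.

Lemma tail_ratio_pos : forall j, 0 < tail_ratio j.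
Proof. intros; apply Rdiv_lt_0_compat; [apply tail_pos|apply pmf_pos]. Qed.

Lemma tail_ratio_geometric : forall j, INR j + 1 > lam -> tail_ratio j <= 1 + lam / (INR j + 1 - lam).
Proof.
  intros j Hj. unfold tail_ratio. rewrite tail_rec.
  pose proof (tail_geometric_bound j Hj). pose proof (pmf_pos j).
  assert (tail (S j) / pmf j <= lam / (INR j + 1 - lam)).
  { apply Rmult_le_reg_r with (pmf j); auto. unfold Rdiv at 1. rewrite Rmult_assoc, Rinv_l; lra. }
  replace ((pmf j + tail (S j)) / pmf j) with (1 + tail (S j) / pmf j) by (field; lra). lra.
Qed.

Lemma tail_ratio_step : forall j t, lam <= INR j + 1 -> tail_ratio j <= tail_ratio (j + t) + INR t.
Proof.
  intros j t Hj. revert j Hj. induction t; intros j Hj; [rewrite Nat.add_0_r; simpl; lra|].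
  rewrite tail_ratio_rec. assert (lam <= INR (S j) + 1) by (rewrite S_INR; lra).
  specialize (IHt (S j) H). replace (S j + t)%nat with (j + S t)%nat in IHt by lia.
  rewrite (S_INR t).
  assert (0 < INR (S j)) by (apply lt_0_INR; lia).
  assert (lam / INR (S j) <= 1) by (apply Rdiv_le_1; [lra| rewrite S_INR; lra]).
  assert (0 <= lam / INR (S j)) by (apply Rdiv_le_0_compat; lra).
  pose proof (tail_ratio_pos (S j)). nra.
Qed.

Lemma sqrt_facts : 0 < sqrt lam /\ sqrt lam * sqrt lam = lam.
Proof. split; [apply sqrt_lt_R0; auto| apply sqrt_sqrt; lra]. Qed.

Lemma tail_ratio_sqrt : forall j, lam <= INR j -> tail_ratio j <= 2 * sqrt lam + 2.
Proof.
  intros j Hj. destruct sqrt_facts as [Hs Hss].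
  destruct (ex_floor (sqrt lam)) as [t [Ht1 Ht2]]; [lra|].
  pose proof (tail_ratio_step j (S t) ltac:(lra)).
  assert (INR (j + S t) + 1 > lam) by (rewrite plus_INR, S_INR; lra).
  pose proof (tail_ratio_geometric _ H0).
  assert (lam / (INR (j + S t) + 1 - lam) <= sqrt lam).
  { rewrite plus_INR, S_INR. apply Rmult_le_reg_r with (INR j + (INR t + 1) + 1 - lam); [lra|].
    field_simplify; try lra; try nra. }
  rewrite S_INR in H. lra.
Qed.

Definition cdf_ratio j := cdf j / pmf j.

Lemma cdf_ratio_succ : forall j, cdf_ratio (S j) = 1 + cdf_ratio j * (INR (S j) / lam).
Proof.
  intros j. unfold cdf_ratio. rewrite cdf_succ, pmf_succ. pose proof (pmf_pos j).
  assert (0 < INR (S j)) by (apply lt_0_INR; lia). field. repeat split; lra.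
Qed.

Lemma cdf_ratio_0 : cdf_ratio 0 = 1.
Proof. unfold cdf_ratio, cdf. simpl sum_f_R0. fold (pmf 0). pose proof (pmf_pos 0). field. lra. Qed.

Lemma cdf_ratio_pos : forall j, 0 < cdf_ratio j.
Proof. intros; apply Rdiv_lt_0_compat; [apply cdf_pos|apply pmf_pos]. Qed.

Lemma cdf_ratio_geometric : forall j, INR j < lam -> cdf_ratio j <= lam / (lam - INR j).
Proof.
  induction j; intros Hj.
  - rewrite cdf_ratio_0. simpl. rewrite Rminus_0_r. unfold Rdiv; rewrite Rinv_r; lra.
  - rewrite S_INR in Hj. specialize (IHj ltac:(lra)).
    rewrite cdf_ratio_succ, S_INR. pose proof (pos_INR j).
    assert (cdf_ratio j * ((INR j + 1) / lam) <= lam / (lam - INR j) * ((INR j + 1) / lam)).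
    { apply Rmult_le_compat_r; auto. apply Rdiv_le_0_compat; lra. }
    assert (1 + lam / (lam - INR j) * ((INR j + 1) / lam) <= lam / (lam - (INR j + 1))); [|lra].
    apply Rmult_le_reg_r with (lam - (INR j + 1)); [lra|].
    apply Rmult_le_reg_r with (lam - INR j); [lra|].
    field_simplify; try lra; try nra.
Qed.

Lemma cdf_ratio_step : forall j t, INR (j + t) <= lam -> cdf_ratio (j + t) <= cdf_ratio j + INR t.
Proof.
  intros j t; induction t; intros H; [rewrite Nat.add_0_r; simpl; lra|].
  rewrite Nat.add_succ_r in *. rewrite cdf_ratio_succ, (S_INR t).
  assert (INR (j + t) <= lam) by (rewrite S_INR in H; lra).
  specialize (IHt H0).
  assert (INR (S (j + t)) / lam <= 1) by (apply Rdiv_le_1; lra).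
  assert (0 <= INR (S (j + t)) / lam) by (apply Rdiv_le_0_compat; [apply pos_INR| lra]).
  pose proof (cdf_ratio_pos (j + t)). nra.
Qed.

Lemma cdf_ratio_sqrt : forall j, INR j <= lam -> cdf_ratio j <= 2 * sqrt lam + 1.
Proof.
  intros j Hj. destruct sqrt_facts as [Hs Hss].
  destruct (Rlt_or_le lam 1) as [Hl|Hl].
  - destruct j; [rewrite cdf_ratio_0; lra|]. rewrite S_INR in Hj. pose proof (pos_INR j). lra.
  - assert (sqrt lam <= lam) by nra.
    destruct (ex_floor (lam - sqrt lam)) as [i0 [Hi1 Hi2]]; [lra|].
    assert (Hgeo : lam / (lam - INR i0) <= sqrt lam).
    { apply Rmult_le_reg_r with (lam - INR i0); [lra|]. field_simplify; try lra; try nra. }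
    destruct (le_lt_dec j i0) as [Hji|Hji].
    + apply le_INR in Hji. pose proof (cdf_ratio_geometric j ltac:(lra)).
      assert (lam / (lam - INR j) <= lam / (lam - INR i0)).
      { apply Rmult_le_reg_r with ((lam - INR j) * (lam - INR i0)); [nra|].
        field_simplify; try lra; try nra. }
      lra.
    + replace j with (i0 + (j - i0))%nat in * by lia.
      pose proof (cdf_ratio_step i0 (j - i0) Hj). pose proof (cdf_ratio_geometric i0 ltac:(lra)).
      rewrite plus_INR in Hj. rewrite minus_INR in * by lia. lra.
Qed.

(* A point mass at least 1/(4 sqrt lam + 3) sits at the integer part m of lam:
   G(m) and F(m+1) are both O(sqrt lam) times p(m) by the Mills bounds. *)
Lemma pmf_floor_lower : forall m, 1 <= lam -> INR m <= lam < INR m + 1 ->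
  1 <= pmf m * (4 * sqrt lam + 3).
Proof.
  intros m Hl [Hm1 Hm2]. destruct sqrt_facts as [Hs Hss].
  pose proof (pmf_pos m) as Hp. pose proof (pmf_pos (S m)).
  assert (Hlow : cdf m <= pmf m * (2 * sqrt lam + 1)).
  { pose proof (cdf_ratio_sqrt m Hm1). unfold cdf_ratio in H0.
    apply Rmult_le_reg_r with (/ pmf m); [apply Rinv_0_lt_compat; lra|].
    replace (pmf m * (2 * sqrt lam + 1) * / pmf m) with (2 * sqrt lam + 1) by (field; lra). exact H0. }
  assert (Hup : tail (S m) <= pmf m * (2 * sqrt lam + 2)).
  { assert (lam <= INR (S m)) by (rewrite S_INR; lra).
    pose proof (tail_ratio_sqrt (S m) H0). unfold tail_ratio in H1.
    assert (0 < INR (S m)) by (apply lt_0_INR; lia).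
    assert (pmf (S m) <= pmf m).
    { rewrite pmf_succ. unfold Rdiv. rewrite Rmult_assoc. fold (lam / INR (S m)).
      assert (lam / INR (S m) <= 1) by (apply Rdiv_le_1; lra). nra. }
    assert (tail (S m) <= pmf (S m) * (2 * sqrt lam + 2)).
    { apply Rmult_le_reg_r with (/ pmf (S m)); [apply Rinv_0_lt_compat; lra|].
      replace (pmf (S m) * (2 * sqrt lam + 2) * / pmf (S m)) with (2 * sqrt lam + 2) by (field; lra).
      exact H1. }
    nra. }
  rewrite tail_succ in Hup. lra.
Qed.

(* (x/(x+s))^s >= 1/3 whenever s^2 <= x, since (1 + s/x)^s <= exp(s^2/x) <= e. *)
Lemma pow_ratio_lower : forall x s, 0 < x -> INR s * INR s <= x -> 1/3 <= (x / (x + INR s)) ^ s.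
Proof.
  intros x s Hx Hs. pose proof (pos_INR s) as Hs0.
  assert (Hq : 0 <= INR s / x) by (apply Rdiv_le_0_compat; lra).
  assert (E : (x / (x + INR s)) ^ s * (1 + INR s / x) ^ s = 1).
  { rewrite <- Rpow_mult_distr. replace (x / (x + INR s) * (1 + INR s / x)) with 1 by (field; lra).
    apply pow1. }
  assert (Hexp : (1 + INR s / x) ^ s <= 3).
  { apply Rle_trans with (exp (INR s / x) ^ s).
    - apply pow_incr. split; [lra|]. apply exp_ineq1_le.
    - rewrite exp_pow. apply Rle_trans with (exp 1); [|apply exp_le_3].
      destruct (Req_dec (INR s * (INR s / x)) 1) as [Heq|Hne]; [rewrite Heq; lra|].
      left. apply exp_increasing.
      assert (INR s * (INR s / x) <= 1); [|lra].
      apply Rmult_le_reg_r with x; auto. field_simplify; lra. }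
  assert (0 < (1 + INR s / x) ^ s) by (apply pow_lt; lra).
  nra.
Qed.

Lemma pmf_window_lower : forall m s t, INR m <= lam -> INR s * INR s <= lam -> (t <= s)%nat ->
  pmf m / 3 <= pmf (m + t).
Proof.
  intros m s t Hm Hs Ht. set (r := lam / (lam + INR s)). pose proof (pos_INR s).
  assert (Hr0 : 0 < r) by (apply Rdiv_lt_0_compat; lra).
  assert (Hr1 : r <= 1) by (apply Rdiv_le_1; lra).
  assert (Hdecay : forall u, (u <= s)%nat -> pmf m * r ^ u <= pmf (m + u)).
  { induction u; intros Hu; [rewrite Nat.add_0_r; simpl; lra|].
    rewrite Nat.add_succ_r, pmf_succ. simpl pow. specialize (IHu ltac:(lia)).
    assert (r <= lam / INR (S (m + u))).
    { unfold r. apply le_INR in Hu. rewrite S_INR in *. rewrite plus_INR.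
      pose proof (pos_INR m). pose proof (pos_INR u).
      apply Rmult_le_reg_r with (lam + INR s); [lra|].
      apply Rmult_le_reg_r with (INR m + INR u + 1); [lra|].
      field_simplify; try lra. nra. }
    pose proof (pmf_pos m). pose proof (pmf_pos (m + u)).
    assert (0 <= r ^ u) by (apply pow_le; lra).
    replace (pmf (m + u) * lam / INR (S (m + u))) with (pmf (m + u) * (lam / INR (S (m + u))))
      by (unfold Rdiv; ring).
    nra. }
  assert (Hrt : r ^ s <= r ^ t).
  { replace s with (t + (s - t))%nat by lia. rewrite pow_add.
    assert (r ^ (s - t) <= 1) by (rewrite <- (pow1 (s - t)); apply pow_incr; lra).
    assert (0 <= r ^ t) by (apply pow_le; lra). nra. }
  pose proof (pow_ratio_lower lam s Hlam Hs). fold r in H0.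
  pose proof (Hdecay t Ht). pose proof (pmf_pos m). nra.
Qed.

Lemma tail_lower_near_mean : forall k, 1 <= lam -> INR k <= lam + 1 -> 1/42 <= tail k.
Proof.
  intros k Hl Hk. destruct sqrt_facts as [Hs Hss].
  assert (Hs1 : 1 <= sqrt lam) by (destruct (Rlt_or_le (sqrt lam) 1); nra).
  destruct (ex_floor lam) as [m [Hm1 Hm2]]; [lra|].
  destruct (ex_floor (sqrt lam)) as [s [Hs1' Hs2']]; [lra|].
  assert (Hsl : INR s * INR s <= lam) by (pose proof (pos_INR s); nra).
  assert (Hkm : (k <= S m)%nat).
  { destruct (le_lt_dec k (S m)); auto. apply le_INR in l. rewrite !S_INR in l. lra. }
  assert (Htail : tail (S m) <= tail k) by (replace (S m) with (k + (S m - k))%nat by lia; apply tail_decr).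
  assert (Hwindow : forall t, (t <= s)%nat -> INR t * (pmf m / 3) <= cdf (m + t) - cdf m).
  { induction t; intros Ht; [rewrite Nat.add_0_r; simpl; lra|].
    rewrite Nat.add_succ_r, cdf_succ, S_INR. specialize (IHt ltac:(lia)).
    pose proof (pmf_window_lower m s (S t) Hm1 Hsl Ht). rewrite Nat.add_succ_r in H. lra. }
  pose proof (Hwindow s (le_n s)). pose proof (growing_ineq _ _ cdf_growing cdf_cv (m + s)).
  rewrite tail_succ in Htail.
  assert (Hs2 : sqrt lam <= 2 * INR s).
  { destruct s; [simpl in Hs2'; lra|]. rewrite S_INR in *. pose proof (pos_INR s). lra. }
  pose proof (pmf_floor_lower m Hl (conj Hm1 Hm2)). pose proof (pmf_pos m).
  nra.
Qed.

(* p(j) <= F(j+1) (j+1)/lam, since p(j+1) = p(j) lam/(j+1) <= F(j+1). *)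
Lemma pmf_le_tail_succ : forall j, pmf j <= tail (S j) * INR (S j) / lam.
Proof.
  intros j. pose proof (tail_rec (S j)). pose proof (pmf_succ j). pose proof (tail_pos (S (S j))).
  assert (0 < INR (S j)) by (apply lt_0_INR; lia).
  apply Rmult_le_reg_r with (lam / INR (S j)); [apply Rdiv_lt_0_compat; lra|].
  replace (tail (S j) * INR (S j) / lam * (lam / INR (S j))) with (tail (S j)) by (field; lra).
  replace (pmf j * (lam / INR (S j))) with (pmf j * lam / INR (S j)) by (unfold Rdiv; ring). lra.
Qed.

(* For lam < 1: F(1) >= p(1) = lam e^(-lam) >= lam/3. *)
Lemma tail1_lower : lam < 1 -> lam / 3 <= tail 1.
Proof.
  intros H1. rewrite (tail_rec 1). pose proof (tail_pos 2).
  assert (Ep : pmf 1 = exp (- lam) * lam) by (unfold pmf, poisson_pmf; simpl; field).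
  rewrite Ep.
  assert (exp (- lam) * exp 1 >= 1).
  { rewrite <- exp_plus. pose proof (exp_ineq1_le (- lam + 1)). lra. }
  pose proof exp_le_3. pose proof (exp_pos (- lam)). pose proof (exp_pos 1).
  assert (exp (- lam) >= 1/3) by (apply Rle_ge; apply Rmult_le_reg_r with (exp 1); auto; nra).
  nra.
Qed.
End Poisson.

Lemma poisson_pmf_derivative : forall i x, derivable_pt_lim (fun y => poisson_pmf y i) x
  (match i with O => - poisson_pmf x 0 | S i' => poisson_pmf x i' - poisson_pmf x i end).
Proof.
  intros i x. unfold poisson_pmf.
  assert (Hd1 : derivable_pt_lim (fun y => exp (- y)) x (- exp (- x))).
  { replace (- exp (- x)) with (exp (- x) * (-1)) by ring.
    apply (derivable_pt_lim_comp (fun y => - y) exp x (-1) (exp (- x))).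
    - apply derivable_pt_lim_opp with (f := fun y => y) (l := 1). apply derivable_pt_lim_id.
    - apply derivable_pt_lim_exp. }
  assert (Hd2 : derivable_pt_lim (mult_real_fct (/ INR (fact i)) (fun y => y ^ i)) x
                  (/ INR (fact i) * (INR i * x ^ pred i))).
  { apply derivable_pt_lim_scal. apply derivable_pt_lim_pow. }
  pose proof (derivable_pt_lim_mult _ _ x _ _ Hd1 Hd2) as H.
  assert (E : forall y, exp (- y) * y ^ i / INR (fact i) =
                        ((fun y => exp (- y)) * mult_real_fct (/ INR (fact i)) (fun y => y ^ i))%F y).
  { intros y. unfold mult_fct, mult_real_fct. unfold Rdiv. ring. }
  replace (match i with
           | O => - (exp (- x) * x ^ 0 / INR (fact 0))
           | S i' => exp (- x) * x ^ i' / INR (fact i') - exp (- x) * x ^ i / INR (fact i) end)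
    with (- exp (- x) * mult_real_fct (/ INR (fact i)) (fun y => y ^ i) x
          + exp (- x) * (/ INR (fact i) * (INR i * x ^ pred i))).
  2:{ unfold mult_real_fct. destruct i; [simpl; field|].
      change (pred (S i)) with i. change (x ^ S i) with (x * x ^ i).
      rewrite fact_simpl, mult_INR, S_INR. pose proof (lt_0_INR _ (lt_O_fact i)).
      pose proof (pos_INR i). field. lra. }
  intros eps Heps. destruct (H eps Heps) as [del Hdel].
  exists del. intros h Hh0 Hh. rewrite !E. apply Hdel; auto.
Qed.

Lemma poisson_cdf_derivative : forall j x,
  derivable_pt_lim (fun y => sum_f_R0 (poisson_pmf y) j) x (- poisson_pmf x j).
Proof.
  induction j; intros x; [apply (poisson_pmf_derivative 0 x)|].
  simpl. pose proof (derivable_pt_lim_plus _ _ x _ _ (IHj x) (poisson_pmf_derivative (S j) x)) as H.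
  replace (- poisson_pmf x (S j)) with (- poisson_pmf x j + (poisson_pmf x j - poisson_pmf x (S j)))
    by ring.
  exact H.
Qed.

Lemma poisson_pmf_nonneg : forall x j, 0 <= x -> 0 <= poisson_pmf x j.
Proof.
  intros. unfold poisson_pmf. apply Rdiv_le_0_compat.
  - apply Rmult_le_pos; [left; apply exp_pos| apply pow_le; auto].
  - apply lt_0_INR, lt_O_fact.
Qed.

Lemma poisson_tail_mono : forall nu lam m, 0 < nu -> nu <= lam ->
  poisson_tail nu m <= poisson_tail lam m.
Proof.
  intros nu lam m Hn Hl. destruct m; [simpl; lra|]. simpl.
  destruct (Req_dec nu lam) as [E|E]; [subst; lra|].
  destruct (MVT_cor2 (fun y => sum_f_R0 (poisson_pmf y) m) (fun y => - poisson_pmf y m) nu lam)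
    as [c [Hc1 Hc2]].
  - lra.
  - intros c _. apply poisson_cdf_derivative.
  - pose proof (poisson_pmf_nonneg c m ltac:(lra)). nra.
Qed.

Definition mills lam j := tail lam j / pmf lam (pred j).

(* The solution g of the Stein equation lam g(w+1) - w g(w) = 1{w >= k} - F(k). *)
Definition stein_sol lam k w :=
  if (w <=? k)%nat then - tail lam k * cdf_ratio lam (pred w) / lam
  else - (1 - tail lam k) * mills lam w / lam.

(* phi(j) = H(j) - H(j-1): below k the increments of g are -F(k)/lam times phi. *)
Definition phi lam j := cdf_ratio lam j - cdf_ratio lam (pred j).

Section Increments.
Variable lam : R.
Hypothesis Hlam : 0 < lam.

Lemma phi_eq : forall j, (1 <= j)%nat -> phi lam j = 1 + cdf_ratio lam (pred j) * ((INR j - lam) / lam).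
Proof.
  intros j Hj. destruct j as [|i]; [lia|]. unfold phi. simpl pred.
  rewrite cdf_ratio_succ by auto. field. lra.
Qed.

(* H(j) increases: phi >= 0 (below the mean by the geometric bound on H). *)
Lemma phi_nonneg : forall j, (1 <= j)%nat -> 0 <= phi lam j.
Proof.
  intros j Hj. rewrite phi_eq by auto. pose proof (cdf_ratio_pos lam Hlam (pred j)).
  destruct (Rle_or_lt lam (INR j)) as [Hj2|Hj2].
  - assert (0 <= (INR j - lam) / lam) by (apply Rdiv_le_0_compat; lra). nra.
  - destruct j as [|i]; [lia|]. simpl pred in *. rewrite S_INR in *.
    pose proof (cdf_ratio_geometric lam Hlam i ltac:(lra)).
    assert (cdf_ratio lam i * ((lam - (INR i + 1)) / lam)
            <= lam / (lam - INR i) * ((lam - (INR i + 1)) / lam)).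
    { apply Rmult_le_compat_r; auto. apply Rdiv_le_0_compat; lra. }
    assert (lam / (lam - INR i) * ((lam - (INR i + 1)) / lam) <= 1).
    { apply Rmult_le_reg_r with (lam - INR i); [lra|]. field_simplify; lra. }
    replace ((INR i + 1 - lam) / lam) with (- ((lam - (INR i + 1)) / lam)) by (field; lra). nra.
Qed.

Lemma phi_diff : forall m, (1 <= m)%nat ->
  phi lam (S m) - phi lam m = (cdf_ratio lam m + (INR m - lam) * phi lam m) / lam.
Proof.
  intros m Hm. unfold phi. destruct m as [|m']; [lia|]. simpl pred.
  rewrite (cdf_ratio_succ lam Hlam (S m')), (cdf_ratio_succ lam Hlam m'), !S_INR. field. lra.
Qed.

Lemma phi_incr : forall m, (1 <= m)%nat -> lam <= INR m -> 0 <= phi lam (S m) - phi lam m.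
Proof.
  intros m Hm Hl. rewrite phi_diff by auto.
  pose proof (cdf_ratio_pos lam Hlam m). pose proof (phi_nonneg m Hm).
  apply Rdiv_le_0_compat; auto. nra.
Qed.

Lemma phi_below_mean : forall n0 j, INR n0 <= lam -> (1 <= j)%nat -> (j <= S n0)%nat ->
  phi lam j <= 1 + (2 * sqrt lam + 1) / lam.
Proof.
  intros n0 j Hn0 Hj1 Hj2. rewrite phi_eq by auto.
  assert (Hpred : INR (pred j) <= lam) by (apply Rle_trans with (INR n0); auto; apply le_INR; lia).
  pose proof (cdf_ratio_sqrt lam Hlam (pred j) Hpred). pose proof (cdf_ratio_pos lam Hlam (pred j)).
  assert (Hj : INR j <= INR n0 + 1) by (rewrite <- S_INR; apply le_INR; auto).
  assert ((INR j - lam) / lam <= 1 / lam) by (apply Rmult_le_compat_r; [left; apply Rinv_0_lt_compat|]; lra).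
  assert (cdf_ratio lam (pred j) * ((INR j - lam) / lam) <= cdf_ratio lam (pred j) * (1 / lam))
    by (apply Rmult_le_compat_l; lra).
  assert (cdf_ratio lam (pred j) * (1 / lam) <= (2 * sqrt lam + 1) / lam).
  { unfold Rdiv. rewrite Rmult_1_l. apply Rmult_le_compat_r; [left; apply Rinv_0_lt_compat|]; lra. }
  lra.
Qed.

(* G(m) F(m+1) <= lam/(m+1-lam) p(m)^2 turns into H(m) F(m+1) <= lam/(m+1-lam). *)
Lemma cdf_ratio_tail_succ : forall i, INR i + 1 > lam ->
  cdf_ratio lam i * tail lam (S i) <= lam / (INR i + 1 - lam).
Proof.
  intros i Hi. pose proof (tail_geometric_bound lam Hlam i Hi).
  pose proof (pmf_pos lam Hlam i). pose proof (cdf_lt1 lam Hlam i). pose proof (cdf_pos lam Hlam i).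
  pose proof (tail_pos lam Hlam (S i)).
  unfold cdf_ratio.
  replace (cdf lam i / pmf lam i * tail lam (S i)) with (cdf lam i * (tail lam (S i) / pmf lam i))
    by (field; lra).
  assert (tail lam (S i) / pmf lam i <= lam / (INR i + 1 - lam)).
  { apply Rmult_le_reg_r with (pmf lam i); auto. unfold Rdiv at 1. rewrite Rmult_assoc, Rinv_l; lra. }
  assert (0 < tail lam (S i) / pmf lam i) by (apply Rdiv_lt_0_compat; lra).
  nra.
Qed.

Lemma phi_tail_bound : forall m, lam < INR m -> phi lam m * tail lam m <= 2.
Proof.
  intros m Hl. destruct m as [|i]; [simpl in Hl; lra|].
  rewrite phi_eq by lia. simpl pred. rewrite S_INR in *.
  pose proof (cdf_ratio_tail_succ i ltac:(lra)). pose proof (tail_le1 lam Hlam (S i)).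
  assert (cdf_ratio lam i * tail lam (S i) * ((INR i + 1 - lam) / lam)
          <= lam / (INR i + 1 - lam) * ((INR i + 1 - lam) / lam))
    by (apply Rmult_le_compat_r; [apply Rdiv_le_0_compat; lra | auto]).
  replace (lam / (INR i + 1 - lam) * ((INR i + 1 - lam) / lam)) with 1 in H1 by (field; lra).
  replace ((1 + cdf_ratio lam i * ((INR i + 1 - lam) / lam)) * tail lam (S i)) with
    (tail lam (S i) + cdf_ratio lam i * tail lam (S i) * ((INR i + 1 - lam) / lam)) by ring.
  lra.
Qed.

Lemma phi_incr_tail_bound : forall m, (1 <= m)%nat -> lam < INR m ->
  (phi lam (S m) - phi lam m) * tail lam m <= (2 * sqrt lam + 2 + 2 * (INR m - lam)) / lam.
Proof.
  intros m Hm Hl. rewrite phi_diff by auto.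
  assert (H1 : cdf_ratio lam m * tail lam m <= 2 * sqrt lam + 2).
  { apply Rle_trans with (tail_ratio lam m); [|apply tail_ratio_sqrt; auto; lra].
    unfold cdf_ratio, tail_ratio. pose proof (pmf_pos lam Hlam m). pose proof (cdf_lt1 lam Hlam m).
    pose proof (cdf_pos lam Hlam m). pose proof (tail_pos lam Hlam m).
    replace (cdf lam m / pmf lam m * tail lam m) with (cdf lam m * (tail lam m / pmf lam m)) by (field; lra).
    assert (0 < tail lam m / pmf lam m) by (apply Rdiv_lt_0_compat; lra). nra. }
  pose proof (phi_tail_bound m Hl). pose proof (tail_pos lam Hlam m).
  replace ((cdf_ratio lam m + (INR m - lam) * phi lam m) / lam * tail lam m)
    with ((cdf_ratio lam m * tail lam m + (INR m - lam) * (phi lam m * tail lam m)) / lam) by (field; lra).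
  apply Rmult_le_compat_r; [left; apply Rinv_0_lt_compat; auto|]. nra.
Qed.

Lemma mills_rec : forall i,
  mills lam (S i) = lam / INR (S i) + mills lam (S (S i)) * (lam / INR (S i)).
Proof.
  intros i. unfold mills. simpl pred. rewrite (tail_rec lam (S i)), (pmf_succ lam i).
  pose proof (pmf_pos lam Hlam i). assert (0 < INR (S i)) by (apply lt_0_INR; lia).
  field. repeat split; lra.
Qed.

(* M(j+1) >= p(j+1)/p(j) = lam/(j+1), since F(j+1) >= p(j+1). *)
Lemma mills_lower : forall j, lam / INR (S j) <= mills lam (S j).
Proof.
  intros j. unfold mills. simpl pred. rewrite (tail_rec lam (S j)), (pmf_succ lam j).
  pose proof (tail_pos lam Hlam (S (S j))). pose proof (pmf_pos lam Hlam j).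
  assert (0 < INR (S j)) by (apply lt_0_INR; lia).
  apply Rmult_le_reg_r with (pmf lam j); auto.
  replace ((pmf lam j * lam / INR (S j) + tail lam (S (S j))) / pmf lam j * pmf lam j)
    with (pmf lam j * lam / INR (S j) + tail lam (S (S j))) by (field; lra).
  replace (lam / INR (S j) * pmf lam j) with (pmf lam j * lam / INR (S j)) by (field; lra). lra.
Qed.

Lemma mills_upper : forall j, INR j + 1 > lam -> mills lam (S j) <= lam / (INR j + 1 - lam).
Proof.
  intros j Hj. unfold mills. simpl pred.
  pose proof (tail_geometric_bound lam Hlam j Hj). pose proof (pmf_pos lam Hlam j).
  apply Rmult_le_reg_r with (pmf lam j); auto. unfold Rdiv at 1. rewrite Rmult_assoc, Rinv_l; lra.
Qed.

Lemma mills_decrement : forall k j, (k <= j)%nat -> lam <= INR k ->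
  0 <= mills lam j - mills lam (S j) <= lam * (lam + 1) / (INR k * (INR k + 1)).
Proof.
  intros k j Hkj Hlk. apply le_INR in Hkj.
  destruct j as [|i]; [simpl in Hkj; lra|].
  assert (Hi : 0 < INR (S i)) by (apply lt_0_INR; lia).
  pose proof (mills_lower (S i)) as Hlo. pose proof (mills_upper (S i) ltac:(lra)) as Hhi.
  rewrite mills_rec. set (j := INR (S i)) in *. set (M := mills lam (S (S i))) in *.
  rewrite S_INR in Hlo. fold j in Hlo.
  replace (lam / j + M * (lam / j) - M) with (lam / j - M * ((j - lam) / j)) by (field; lra).
  assert (Hpos : 0 <= (j - lam) / j) by (apply Rdiv_le_0_compat; lra).
  split.
  - assert (M * ((j - lam) / j) <= lam / (j + 1 - lam) * ((j - lam) / j))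
      by (apply Rmult_le_compat_r; auto).
    assert (lam / (j + 1 - lam) * ((j - lam) / j) <= lam / j).
    { apply Rmult_le_reg_r with (j + 1 - lam); [lra|]. apply Rmult_le_reg_r with j; [lra|].
      field_simplify; try lra; nra. }
    lra.
  - assert (lam / (j + 1) * ((j - lam) / j) <= M * ((j - lam) / j)) by (apply Rmult_le_compat_r; auto).
    assert (lam / j - lam / (j + 1) * ((j - lam) / j) = lam * (lam + 1) / (j * (j + 1))) by (field; lra).
    assert (lam * (lam + 1) / (j * (j + 1)) <= lam * (lam + 1) / (INR k * (INR k + 1))).
    { apply Rmult_le_reg_r with (j * (j + 1)); [nra|].
      apply Rmult_le_reg_r with (INR k * (INR k + 1)); [nra|].
      field_simplify; try nra.
      assert (INR k * (INR k + 1) <= j * (j + 1)) by nra.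
      assert (0 <= lam * (lam + 1)) by nra. nra. }
    lra.
Qed.

End Increments.

Section SteinSolution.
Variable lam : R.
Hypothesis Hlam : 0 < lam.
Variable k : nat.
Hypothesis Hk : (1 <= k)%nat.

(* Both formulas for g agree at w = k. *)
Lemma stein_sol_above : forall w, (k <= w)%nat ->
  stein_sol lam k w = - (1 - tail lam k) * mills lam w / lam.
Proof.
  intros w Hw. unfold stein_sol. destruct (Nat.leb_spec w k); auto.
  assert (w = k) by lia. subst w. unfold mills, cdf_ratio.
  destruct k as [|k']; [lia|]. simpl pred. rewrite tail_succ.
  pose proof (pmf_pos lam Hlam k'). field. lra.
Qed.

Lemma stein_sol_equation : forall w,
  lam * stein_sol lam k (S w) - INR w * stein_sol lam k w = tail_ind k w - tail lam k.
Proof.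
  intros w. unfold tail_ind. destruct (Nat.leb_spec k w) as [Hkw|Hkw].
  - rewrite !stein_sol_above by lia. unfold mills.
    destruct w as [|w']; [lia|]. simpl pred.
    rewrite (tail_rec lam (S w')), pmf_succ by auto.
    pose proof (pmf_pos lam Hlam w'). assert (0 < INR (S w')) by (apply lt_0_INR; lia).
    field. lra.
  - unfold stein_sol. destruct (Nat.leb_spec (S w) k); [|lia]. destruct (Nat.leb_spec w k); [|lia].
    destruct w as [|w']; simpl pred.
    + simpl. rewrite cdf_ratio_0 by auto. field. lra.
    + rewrite cdf_ratio_succ by auto. field. lra.
Qed.

Lemma stein_sol_incr_below : forall j, (1 <= j)%nat -> (S j <= k)%nat ->
  stein_sol lam k (S j) - stein_sol lam k j = - (tail lam k / lam) * phi lam j.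
Proof.
  intros j H1 H2. unfold stein_sol, phi.
  destruct (Nat.leb_spec (S j) k); [|lia]. destruct (Nat.leb_spec j k); [|lia].
  simpl pred. field. lra.
Qed.

Lemma stein_sol_incr_above : forall j, (k <= j)%nat ->
  stein_sol lam k (S j) - stein_sol lam k j = ((1 - tail lam k) / lam) * (mills lam j - mills lam (S j)).
Proof. intros j H. rewrite !stein_sol_above by lia. field. lra. Qed.
End SteinSolution.

Lemma telescope_tail_ind : forall (a : nat -> R) j n w, (j <= S w)%nat -> (S w <= j + n)%nat ->
  a (S w) = a j + sumL (fun m => (a (S m) - a m) * tail_ind m w) (seq j n).
Proof.
  intros a j n w H1 H2.
  replace n with ((S w - j) + (n - (S w - j)))%nat by lia.
  rewrite seq_app, sumL_app.
  rewrite (sumL_ext_in _ _ (fun m => a (S m) - a m) (seq j (S w - j))).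
  2:{ intros m Hm. apply in_seq in Hm. unfold tail_ind. destruct (Nat.leb_spec m w); [ring|lia]. }
  rewrite (sumL_ext_in _ _ (fun _ => 0) (seq (j + (S w - j)) _)).
  2:{ intros m Hm. apply in_seq in Hm. unfold tail_ind. destruct (Nat.leb_spec m w); [lia|ring]. }
  rewrite sumL_telescope. replace (j + (S w - j))%nat with (S w) by lia.
  assert (Hz : forall xs : list nat, sumL (fun _ => 0) xs = 0) by (induction xs; simpl; lra).
  rewrite Hz. ring.
Qed.

(* Two elementary estimates converting sqrt lam / lam terms into 1 + xi^2, xi^2 = d^2/lam. *)
Lemma sqrt_over_mean_bound : forall lam d, 0 < lam -> 1 - lam <= d -> 0 <= d ->
  (2 * sqrt lam + 1) / lam <= 6 + 12 * (d ^ 2 / lam).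
Proof.
  intros lam d Hl Hd Hd0. destruct (sqrt_facts lam Hl) as [Hs Hss].
  assert (0 <= d ^ 2 / lam) by (apply Rdiv_le_0_compat; [nra|lra]).
  destruct (Rle_or_lt 1 lam) as [H1|H1].
  - assert (sqrt lam <= lam) by nra.
    assert ((2 * sqrt lam + 1) / lam <= 3) by (apply Rmult_le_reg_r with lam; auto; field_simplify; lra).
    lra.
  - assert (sqrt lam < 1) by nra.
    assert ((2 * sqrt lam + 1) / lam <= 3 / lam) by (apply Rmult_le_reg_r with lam; auto; field_simplify; lra).
    destruct (Rle_or_lt (1/2) lam).
    + assert (3 / lam <= 6) by (apply Rmult_le_reg_r with lam; auto; field_simplify; lra). lra.
    + assert (3 / lam <= 12 * (d ^ 2 / lam)) by (apply Rmult_le_reg_r with lam; auto; field_simplify; nra).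
      lra.
Qed.

Lemma deviation_count_bound : forall lam d cn, 0 < lam -> 0 <= cn -> (cn = 0 \/ (1 <= cn /\ cn + 1 <= d)) ->
  cn * (2 * ((2 * sqrt lam + 2 + 2 * d) / lam)) <= 4 + 12 * (d ^ 2 / lam).
Proof.
  intros lam d cn Hl Hc H. destruct (sqrt_facts lam Hl) as [Hs Hss].
  assert (0 <= d ^ 2 / lam) by (apply Rdiv_le_0_compat; [nra|lra]).
  destruct H as [H|[H1 H2]]; [subst; lra|].
  assert (2 * d * sqrt lam <= lam + d ^ 2) by (pose proof (pow2_ge_0 (sqrt lam - d)); nra).
  assert (cn * (2 * ((2 * sqrt lam + 2 + 2 * d) / lam)) <= d * (2 * ((2 * sqrt lam + 2 + 2 * d) / lam))).
  { apply Rmult_le_compat_r; [|lra]. apply Rmult_le_pos; [lra|]. apply Rdiv_le_0_compat; lra. }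
  assert (d * (2 * ((2 * sqrt lam + 2 + 2 * d) / lam)) <= 4 + 12 * (d ^ 2 / lam)); [|lra].
  replace (d * (2 * ((2 * sqrt lam + 2 + 2 * d) / lam)))
    with ((4 * d * sqrt lam + 4 * d + 4 * d ^ 2) * / lam) by (field; lra).
  replace (4 + 12 * (d ^ 2 / lam)) with ((4 * lam + 12 * d ^ 2) * / lam) by (field; lra).
  apply Rmult_le_compat_r; [left; apply Rinv_0_lt_compat; auto|]. nra.
Qed.

(* Tail comparison with the Poisson(lam) law strictly between lam and k; this is what the
   induction hypothesis provides for a leave-one-out sum. *)
Definition tail_dominated lam k l :=
  forall m, lam < INR m -> (m <= k - 1)%nat -> expect l (tail_ind m) <= 2 * tail lam m.

Section IncrementBound.
Variables (lam : R) (k : nat) (l : list R) (n0 : nat).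
Hypothesis Hlam : 0 < lam.
Hypothesis Hlk : lam <= INR k.
Hypothesis Hl : probs l.
Hypothesis Hdom : tail_dominated lam k l.
Hypothesis Hn0 : INR n0 <= lam < INR n0 + 1.

Lemma one_le_k : (1 <= k)%nat.
Proof. destruct k; [simpl in Hlk; lra | lia]. Qed.

(* Below k the increment is -F(k)/lam phi(w+1); from k on it is the small part [chi]. *)
Definition psi w := if (S (S w) <=? k)%nat then phi lam (S w) else 0.
Definition chi w :=
  if (k <=? S w)%nat then stein_sol lam k (S (S w)) - stein_sol lam k (S w) else 0.

Lemma increment_split : forall w,
  stein_sol lam k (S (S w)) - stein_sol lam k (S w) = - (tail lam k / lam) * psi w + chi w.
Proof.
  intros w. unfold psi, chi. destruct (Nat.leb_spec (S (S w)) k) as [Hw|Hw].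
  - destruct (Nat.leb_spec k (S w)); [lia|]. rewrite stein_sol_incr_below by (auto; lia). ring.
  - destruct (Nat.leb_spec k (S w)); [ring|lia].
Qed.

(* phi is at most phi0 up to n0 + 1, and beyond the mean it grows by its nonnegative
   increments phi(m+1) - phi(m), m in [n0+1, k-1). *)
Definition phi0 := 1 + (2 * sqrt lam + 1) / lam.
Definition psi_majorant w :=
  phi0 + sumL (fun m => (phi lam (S m) - phi lam m) * tail_ind m w) (seq (S n0) (k - 1 - S n0)).

Lemma phi_incr_window : forall m, In m (seq (S n0) (k - 1 - S n0)) ->
  0 <= phi lam (S m) - phi lam m /\ lam < INR m /\ (m <= k - 1)%nat.
Proof.
  intros m Hm. apply in_seq in Hm.
  assert (lam < INR m) by (apply Rlt_le_trans with (INR n0 + 1); [lra|]; rewrite <- S_INR; apply le_INR; lia).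
  repeat split; [apply (phi_incr lam Hlam); [lia | lra] | auto | lia].
Qed.

Lemma psi_le_majorant : forall w, 0 <= psi w <= psi_majorant w.
Proof.
  intros w. unfold psi, psi_majorant.
  assert (Hsum : 0 <= sumL (fun m => (phi lam (S m) - phi lam m) * tail_ind m w) (seq (S n0) (k - 1 - S n0))).
  { apply sumL_nonneg. intros m Hm. destruct (phi_incr_window m Hm) as [Hc _].
    pose proof (tail_ind_bounds m w). nra. }
  assert (Hphi0 : 0 <= phi0) by (unfold phi0; pose proof (sqrt_facts lam Hlam) as [Hs _];
                                 assert (0 <= (2 * sqrt lam + 1) / lam) by (apply Rdiv_le_0_compat; lra); lra).
  destruct (Nat.leb_spec (S (S w)) k) as [Hw|Hw]; [|lra].
  split; [apply phi_nonneg; auto; lia|].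
  destruct (le_lt_dec (S w) (S n0)) as [Hwn|Hwn].
  - pose proof (phi_below_mean lam Hlam n0 (S w) (proj1 Hn0) ltac:(lia) Hwn). unfold phi0. lra.
  - rewrite (telescope_tail_ind (phi lam) (S n0) (k - 1 - S n0) w) by lia.
    pose proof (phi_below_mean lam Hlam n0 (S n0) (proj1 Hn0) ltac:(lia) (le_n _)). unfold phi0 in *. lra.
Qed.

(* Each increment phi(m+1) - phi(m) is weighted by P(W' >= m) <= 2 F(m), and its product
   with F(m) is controlled by [phi_incr_tail_bound]. *)
Lemma psi_majorant_expect :
  expect l psi_majorant <= phi0 + INR (k - 1 - S n0) * (2 * ((2 * sqrt lam + 2 + 2 * (INR k - lam)) / lam)).
Proof.
  unfold psi_majorant.
  rewrite (expect_ext l _ (fun w => phi0 * 1 + 1 * sumL (fun m => (phi lam (S m) - phi lam m) * tail_ind m w)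
                                                      (seq (S n0) (k - 1 - S n0)))) by (intros; ring).
  rewrite expect_lin, expect_const, expect_sumL.
  set (B := 2 * ((2 * sqrt lam + 2 + 2 * (INR k - lam)) / lam)).
  assert (Hterm : forall m, In m (seq (S n0) (k - 1 - S n0)) ->
            (phi lam (S m) - phi lam m) * expect l (tail_ind m) <= B).
  { intros m Hm. destruct (phi_incr_window m Hm) as [Hc [Hml Hmk]].
    pose proof (Hdom m Hml Hmk).
    pose proof (phi_incr_tail_bound lam Hlam m ltac:(destruct m; [simpl in Hml; lra|lia]) Hml).
    assert (INR m <= INR k) by (apply le_INR; lia).
    assert ((2 * sqrt lam + 2 + 2 * (INR m - lam)) / lam <= (2 * sqrt lam + 2 + 2 * (INR k - lam)) / lam)
      by (apply Rmult_le_compat_r; [left; apply Rinv_0_lt_compat|]; lra).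
    assert ((phi lam (S m) - phi lam m) * expect l (tail_ind m) <= (phi lam (S m) - phi lam m) * (2 * tail lam m))
      by (apply Rmult_le_compat_l; auto).
    unfold B. nra. }
  pose proof (sumL_const_le _ _ _ _ Hterm) as Hs. rewrite length_seq in Hs. lra.
Qed.

Lemma psi_expect_bound : 0 <= expect l psi <= 11 + 24 * ((INR k - lam) ^ 2 / lam).
Proof.
  set (d := INR k - lam).
  assert (Hd0 : 0 <= d) by (unfold d; lra).
  assert (Hd1 : 1 - lam <= d) by (unfold d; pose proof one_le_k; apply le_INR in H; simpl in H; lra).
  split.
  - rewrite <- (expect_const l 0). apply expect_mono; auto. intros w; apply psi_le_majorant.
  - apply Rle_trans with (expect l psi_majorant); [apply expect_mono; auto; intros w; apply psi_le_majorant|].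
    eapply Rle_trans; [apply psi_majorant_expect|]. fold d. unfold phi0.
    pose proof (sqrt_over_mean_bound lam d Hlam Hd1 Hd0).
    assert (INR (k - 1 - S n0) * (2 * ((2 * sqrt lam + 2 + 2 * d) / lam)) <= 4 + 12 * (d ^ 2 / lam)).
    { apply deviation_count_bound; auto; [apply pos_INR|].
      destruct (k - 1 - S n0)%nat as [|cn] eqn:Ec; [left; reflexivity|right].
      assert (INR (S cn) = INR k - 1 - INR (S n0)) by (rewrite <- Ec, !minus_INR by lia; simpl; ring).
      rewrite !S_INR in *. pose proof (pos_INR cn). unfold d. split; lra. }
    assert (0 <= d ^ 2 / lam) by (apply Rdiv_le_0_compat; [nra|lra]). lra.
Qed.

Definition top_weight := (lam + 1) / (INR k * (INR k + 1)).

Lemma top_weight_nonneg : 0 <= top_weight.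
Proof.
  pose proof one_le_k as Hk. apply le_INR in Hk. simpl in Hk.
  unfold top_weight. apply Rdiv_le_0_compat; nra.
Qed.

Lemma chi_le : forall w, 0 <= chi w <= top_weight * tail_ind (k - 1) w.
Proof.
  intros w. pose proof top_weight_nonneg. pose proof (tail_pos lam Hlam k). pose proof (tail_le1 lam Hlam k).
  unfold chi. destruct (Nat.leb_spec k (S w)) as [Hw|Hw].
  - rewrite stein_sol_incr_above by (auto using one_le_k).
    destruct (mills_decrement lam Hlam k (S w) Hw Hlk) as [Hdec0 Hdec1].
    replace (tail_ind (k - 1) w) with 1 by (unfold tail_ind; destruct (Nat.leb_spec (k - 1) w); [auto|lia]).
    assert (0 <= (1 - tail lam k) / lam) by (apply Rdiv_le_0_compat; lra).
    assert ((1 - tail lam k) / lam <= 1 / lam) by (apply Rmult_le_compat_r; [left; apply Rinv_0_lt_compat|]; lra).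
    assert (Hk0 : INR k <> 0) by (apply not_0_INR; pose proof one_le_k; lia).
    replace (top_weight * 1) with (1 / lam * (lam * (lam + 1) / (INR k * (INR k + 1))))
      by (unfold top_weight; pose proof (pos_INR k); field; repeat split; lra).
    split; [nra|]. apply Rmult_le_compat; auto; lra.
  - pose proof (tail_ind_bounds (k - 1) w). split; nra.
Qed.

(* Far above the mean, P(W' >= k-1) <= 2 F(k-1) <= 2 F(k) (1 + k/lam). *)
Lemma top_weight_far : lam < INR (k - 1) -> top_weight * expect l (tail_ind (k - 1)) <= 42 * tail lam k / lam.
Proof.
  intros Hck. pose proof one_le_k as Hk1. pose proof top_weight_nonneg.
  assert (Hkpos : 0 < INR k) by (apply lt_0_INR; lia).
  assert (HEk : INR (k - 1) = INR k - 1) by (rewrite minus_INR by lia; simpl; ring).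
  pose proof (Hdom (k - 1)%nat Hck (le_n _)).
  pose proof (tail_rec lam (k - 1)) as Hrec. pose proof (pmf_le_tail_succ lam Hlam (k - 1)) as Hp.
  replace (S (k - 1)) with k in Hrec, Hp by lia.
  pose proof (tail_pos lam Hlam k).
  assert (expect l (tail_ind (k - 1)) <= 2 * (tail lam k + tail lam k * INR k / lam)) by lra.
  apply Rle_trans with (top_weight * (2 * (tail lam k + tail lam k * INR k / lam))); [apply Rmult_le_compat_l; auto|].
  unfold top_weight. apply Rmult_le_reg_r with (INR k * (INR k + 1) * lam); [nra|].
  replace ((lam + 1) / (INR k * (INR k + 1)) * (2 * (tail lam k + tail lam k * INR k / lam)) * (INR k * (INR k + 1) * lam))
    with (2 * tail lam k * ((lam + 1) * (lam + INR k))) by (field; lra).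
  replace (42 * tail lam k / lam * (INR k * (INR k + 1) * lam))
    with (2 * tail lam k * (21 * (INR k * (INR k + 1)))) by (field; lra).
  apply Rmult_le_compat_l; [lra|]. nra.
Qed.

(* Near the mean, F(k) is bounded below by an absolute constant (times lam if lam < 1). *)
Lemma top_weight_near : INR (k - 1) <= lam -> top_weight * expect l (tail_ind (k - 1)) <= 42 * tail lam k / lam.
Proof.
  intros Hck. pose proof one_le_k as Hk1. pose proof top_weight_nonneg.
  assert (Hkpos : 0 < INR k) by (apply lt_0_INR; lia).
  assert (HEk : INR (k - 1) = INR k - 1) by (rewrite minus_INR by lia; simpl; ring).
  pose proof (expect_tail_ind_bounds l (k - 1) Hl).
  assert (top_weight * expect l (tail_ind (k - 1)) <= top_weight) by nra.
  destruct (Rle_or_lt 1 lam) as [Hl1|Hl1].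
  - pose proof (tail_lower_near_mean lam Hlam k Hl1 ltac:(lra)).
    assert (top_weight <= 1 / lam).
    { unfold top_weight. apply Rmult_le_reg_r with (INR k * (INR k + 1) * lam); [nra|].
      field_simplify; try lra; nra. }
    assert (1 / lam <= 42 * tail lam k / lam) by (apply Rmult_le_compat_r; [left; apply Rinv_0_lt_compat|]; lra).
    lra.
  - assert (Hk1eq : k = 1%nat) by (destruct k as [|[|k']]; [lia|auto|]; rewrite !S_INR in HEk; pose proof (pos_INR k'); lra).
    assert (Hk : INR k = 1) by (rewrite Hk1eq; reflexivity).
    assert (HF : tail lam k = tail lam 1) by (rewrite Hk1eq; reflexivity).
    pose proof (tail1_lower lam Hlam Hl1). rewrite <- HF in *.
    assert (top_weight <= 1) by (unfold top_weight; rewrite Hk; apply Rmult_le_reg_r with 2; [lra|]; field_simplify; lra).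
    assert (1 <= 42 * tail lam k / lam) by (apply Rmult_le_reg_r with lam; auto; field_simplify; lra).
    lra.
Qed.

Lemma chi_expect_bound : 0 <= expect l chi <= 42 * tail lam k / lam.
Proof.
  split.
  - rewrite <- (expect_const l 0). apply expect_mono; auto. intros w; apply chi_le.
  - apply Rle_trans with (expect l (fun w => top_weight * tail_ind (k - 1) w + 0 * tail_ind (k - 1) w)).
    { apply expect_mono; auto. intros w. pose proof (chi_le w). lra. }
    rewrite expect_lin, Rmult_0_l, Rplus_0_r.
    destruct (Rlt_or_le lam (INR (k - 1))); [apply top_weight_far | apply top_weight_near]; auto.
Qed.

Lemma increment_expect_bound_floor :
  Rabs (expect l (fun w => stein_sol lam k (S (S w)) - stein_sol lam k (S w)))
    <= 100 * (1 + (INR k - lam) ^ 2 / lam) * tail lam k / lam.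
Proof.
  rewrite (expect_ext l _ (fun w => - (tail lam k / lam) * psi w + 1 * chi w))
    by (intros; rewrite increment_split; ring).
  rewrite expect_lin.
  pose proof psi_expect_bound. pose proof chi_expect_bound. pose proof (tail_pos lam Hlam k).
  assert (Hfl : 0 < tail lam k / lam) by (apply Rdiv_lt_0_compat; lra).
  assert (0 <= (INR k - lam) ^ 2 / lam) by (apply Rdiv_le_0_compat; [nra|lra]).
  assert (tail lam k / lam * expect l psi <= tail lam k / lam * (11 + 24 * ((INR k - lam) ^ 2 / lam)))
    by (apply Rmult_le_compat_l; lra).
  replace (100 * (1 + (INR k - lam) ^ 2 / lam) * tail lam k / lam)
    with (tail lam k / lam * (100 * (1 + (INR k - lam) ^ 2 / lam))) by (field; lra).
  replace (42 * tail lam k / lam) with (tail lam k / lam * 42) in H0 by (field; lra).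
  apply Rabs_le. split; nra.
Qed.
End IncrementBound.

Lemma increment_expect_bound : forall lam k l, 0 < lam -> lam <= INR k -> probs l ->
  tail_dominated lam k l ->
  Rabs (expect l (fun w => stein_sol lam k (S (S w)) - stein_sol lam k (S w)))
    <= 100 * (1 + (INR k - lam) ^ 2 / lam) * tail lam k / lam.
Proof.
  intros lam k l Hlam Hlk Hl Hdom. destruct (ex_floor lam) as [n0 Hn0]; [lra|].
  exact (increment_expect_bound_floor lam k l n0 Hlam Hlk Hl Hdom Hn0).
Qed.

Lemma stein_representation : forall L k, 0 < lamL L -> (1 <= k)%nat ->
  expect L (tail_ind k) - tail (lamL L) k =
  sumL (fun bl => fst bl ^ 2 * expect (snd bl)
         (fun w => stein_sol (lamL L) k (S (S w)) - stein_sol (lamL L) k (S w))) (leave_one_out L).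
Proof.
  intros L k Hlam Hk. rewrite <- stein_identity_bernoulli.
  rewrite (expect_ext L (tail_ind k)
             (fun w => 1 * (lamL L * stein_sol (lamL L) k (S w) - INR w * stein_sol (lamL L) k w)
                       + tail (lamL L) k * 1))
    by (intros w; rewrite (stein_sol_equation (lamL L) Hlam k Hk w); ring).
  rewrite expect_lin, expect_const. ring.
Qed.

Lemma leave_one_out_sum_bound : forall L (f : list R -> R) B, probs L ->
  (forall b l, In (b, l) (leave_one_out L) -> Rabs (f l) <= B) ->
  Rabs (sumL (fun bl => fst bl ^ 2 * f (snd bl)) (leave_one_out L)) <= pmaxL L * lamL L * B.
Proof.
  intros L f B HL HB. eapply Rle_trans; [apply sumL_abs|].
  rewrite <- leave_one_out_mean.
  replace (pmaxL L * sumL fst (leave_one_out L) * B)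
    with (sumL (fun bl => (pmaxL L * B) * fst bl + 0 * fst bl) (leave_one_out L))
    by (rewrite sumL_lin; ring).
  apply sumL_le_in. intros [b l] Hbl. simpl.
  destruct (leave_one_out_spec L b l Hbl) as [HbL _].
  assert (Hb : 0 <= b <= 1) by (apply HL; auto). pose proof (pmaxL_ge L b HbL).
  pose proof (HB b l Hbl). pose proof (Rabs_pos (f l)).
  rewrite Rabs_mult, (Rabs_right (b * (b * 1))) by (apply Rle_ge; nra).
  assert (b * (b * 1) <= b * pmaxL L) by nra.
  apply Rle_trans with (b * pmaxL L * Rabs (f l)); [apply Rmult_le_compat_r; auto|]. nra.
Qed.

(* Removing one variable (p_i = b) and moving from k to m <= k - 1 does not increase
   the squared standardized deviation, as long as the smallness condition holds. *)
Lemma deviation_leave_one_out : forall lam b m d, 0 <= b <= 1/100 -> b * (d ^ 2 / lam) <= 1/100 ->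
  0 < lam - b -> lam < m -> m <= lam + d - 1 -> (m - (lam - b)) ^ 2 / (lam - b) <= d ^ 2 / lam.
Proof.
  intros lam b m d Hb Hbd Hnu Hm Hmk.
  set (e := 1 - b). assert (He : 99/100 <= e <= 1) by (unfold e; lra).
  assert (H1 : 0 < m - (lam - b) <= d - e) by (unfold e; lra).
  assert (H2 : b * d ^ 2 <= lam / 100).
  { apply Rmult_le_reg_r with (/ lam); [apply Rinv_0_lt_compat; lra|].
    replace (b * d ^ 2 * / lam) with (b * (d ^ 2 / lam)) by (field; lra).
    replace (lam / 100 * / lam) with (1/100) by (field; lra). auto. }
  assert (H3 : (d - e) ^ 2 * lam <= d ^ 2 * (lam - b)).
  { assert (lam * e * e <= lam * e * (2 * d - e)) by (apply Rmult_le_compat_l; [apply Rmult_le_pos|]; lra).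
    assert (Hee : 1/100 <= e * e) by nra.
    assert (lam / 100 <= lam * e * e)
      by (replace (lam / 100) with (lam * (1/100)) by field; rewrite Rmult_assoc; apply Rmult_le_compat_l; lra).
    replace ((d - e) ^ 2 * lam) with (d ^ 2 * lam - lam * e * (2 * d - e)) by ring. lra. }
  assert (H4 : (m - (lam - b)) ^ 2 <= (d - e) ^ 2) by nra.
  apply Rmult_le_reg_r with ((lam - b) * lam); [nra|].
  replace ((m - (lam - b)) ^ 2 / (lam - b) * ((lam - b) * lam)) with ((m - (lam - b)) ^ 2 * lam) by (field; lra).
  replace (d ^ 2 / lam * ((lam - b) * lam)) with (d ^ 2 * (lam - b)) by (field; lra).
  nra.
Qed.

(* The statement proved by induction on the number of variables (c = 1/100, C = 100). *)
Definition relative_tail_bound (L : list R) :=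
  forall k, lamL L <= INR k ->
    pmaxL L * (1 + (INR k - lamL L) ^ 2 / lamL L) <= 1/100 ->
    Rabs (expect L (tail_ind k) / tail (lamL L) k - 1)
      <= 100 * pmaxL L * (1 + (INR k - lamL L) ^ 2 / lamL L).

Lemma relative_bound_doubles : forall l m, 0 < lamL l -> relative_tail_bound l -> lamL l <= INR m ->
  pmaxL l * (1 + (INR m - lamL l) ^ 2 / lamL l) <= 1/100 ->
  expect l (tail_ind m) <= 2 * tail (lamL l) m.
Proof.
  intros l m Hz Hrel Hml Hcl. pose proof (Hrel m Hml Hcl) as IH.
  pose proof (tail_pos (lamL l) Hz m) as HFl.
  assert (Hr : expect l (tail_ind m) / tail (lamL l) m <= 2).
  { pose proof (Rle_abs (expect l (tail_ind m) / tail (lamL l) m - 1)). lra. }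
  apply Rmult_le_reg_r with (/ tail (lamL l) m); [apply Rinv_0_lt_compat; auto|].
  replace (2 * tail (lamL l) m * / tail (lamL l) m) with 2 by (field; lra). auto.
Qed.

Lemma leave_one_out_dominated : forall L b l k, probs L -> 0 < lamL L ->
  In (b, l) (leave_one_out L) -> (0 < lamL l -> relative_tail_bound l) ->
  lamL L <= INR k -> pmaxL L * (1 + (INR k - lamL L) ^ 2 / lamL L) <= 1/100 ->
  tail_dominated (lamL L) k l.
Proof.
  intros L b l k HL Hlam Hbl Hrel Hk Hc m Hm Hmk.
  destruct (leave_one_out_spec L b l Hbl) as [HbL [Hsub [Hlaml _]]].
  assert (Hl : probs l) by (intros x Hx; apply HL; auto).
  assert (Hb : 0 <= b <= 1) by (apply HL; auto). pose proof (pmaxL_ge L b HbL).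
  pose proof (pmaxL_nonneg L). pose proof (tail_pos (lamL L) Hlam m).
  assert (Hd2 : 0 <= (INR k - lamL L) ^ 2 / lamL L) by (apply Rdiv_le_0_compat; [nra|lra]).
  assert (Hm1 : (1 <= m)%nat) by (destruct m; [simpl in Hm; lra| lia]).
  destruct (Rle_or_lt (lamL l) 0) as [Hz|Hz].
  - rewrite expect_all_zero by (apply lamL_zero; auto).
    unfold tail_ind. destruct (Nat.leb_spec m 0); [lia|lra].
  - assert (Hpl : pmaxL l <= pmaxL L) by (apply pmaxL_le; auto; intros x Hx; apply pmaxL_ge; auto).
    assert (Hxi : (INR m - lamL l) ^ 2 / lamL l <= (INR k - lamL L) ^ 2 / lamL L).
    { rewrite Hlaml. apply deviation_leave_one_out; [nra| nra | lra | lra |].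
      assert (Hk1 : (1 <= k)%nat) by lia.
      apply le_INR in Hmk. rewrite minus_INR in Hmk by lia. simpl in Hmk. lra. }
    assert (Hcl : pmaxL l * (1 + (INR m - lamL l) ^ 2 / lamL l) <= 1/100).
    { assert (0 <= pmaxL l) by apply pmaxL_nonneg.
      assert (0 <= (INR m - lamL l) ^ 2 / lamL l) by (apply Rdiv_le_0_compat; [nra|lra]).
      eapply Rle_trans; [|exact Hc]. apply Rmult_le_compat; lra. }
    pose proof (relative_bound_doubles l m Hz (Hrel Hz) ltac:(lra) Hcl).
    pose proof (poisson_tail_mono (lamL l) (lamL L) m Hz ltac:(lra)).
    unfold tail in *. lra.
Qed.

Lemma relative_tail_bound_all : forall n L, (length L <= n)%nat -> probs L -> 0 < lamL L ->
  relative_tail_bound L.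
Proof.
  induction n; intros L Hlen HL Hlam k Hk Hc.
  { destruct L; [unfold lamL in Hlam; simpl in Hlam; lra | simpl in Hlen; lia]. }
  set (X := 1 + (INR k - lamL L) ^ 2 / lamL L) in *.
  pose proof (tail_pos (lamL L) Hlam k) as HF.
  assert (Hk1 : (1 <= k)%nat) by (destruct k; [simpl in Hk; lra| lia]).
  assert (Hsum : Rabs (expect L (tail_ind k) - tail (lamL L) k)
                 <= pmaxL L * lamL L * (100 * X * tail (lamL L) k / lamL L)).
  { rewrite stein_representation by auto.
    apply (leave_one_out_sum_bound L (fun l => expect l (fun w => stein_sol (lamL L) k (S (S w))
                                                                 - stein_sol (lamL L) k (S w)))); auto.
    intros b l Hbl. destruct (leave_one_out_spec L b l Hbl) as [_ [Hsub [_ Hlenl]]].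
    apply increment_expect_bound; auto; [intros x Hx; apply HL; auto|].
    apply (leave_one_out_dominated L b l); auto.
    intros Hz. apply IHn; [lia | intros x Hx; apply HL; auto | auto]. }
  replace (pmaxL L * lamL L * (100 * X * tail (lamL L) k / lamL L))
    with (100 * pmaxL L * X * tail (lamL L) k) in Hsum by (field; lra).
  replace (expect L (tail_ind k) / tail (lamL L) k - 1)
    with ((expect L (tail_ind k) - tail (lamL L) k) / tail (lamL L) k) by (field; lra).
  unfold Rdiv. rewrite Rabs_mult, (Rabs_right (/ tail (lamL L) k))
    by (apply Rle_ge; left; apply Rinv_0_lt_compat; auto).
  apply Rmult_le_reg_r with (tail (lamL L) k); auto.
  rewrite Rmult_assoc, Rinv_l by lra. lra.
Qed.

Theorem mainTheorem4 :
  exists c C : R, 0 < c /\ 0 < C /\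
  forall (n : nat) (p : nat -> R),
    (forall i : nat, (i < n)%nat -> 0 <= p i <= 1) ->
    0 < lam p n ->
    forall k : nat,
      lam p n <= INR k ->
      let xi := (INR k - lam p n) / sqrt (lam p n) in
      pmax p n * (1 + xi ^ 2) <= c ->
      Rabs (bernoulli_sum_tail p n k / poisson_tail (lam p n) k - 1)
        <= C * pmax p n * (1 + xi ^ 2).
Proof.
  exists (1/100), 100. split; [lra|]. split; [lra|].
  intros n p Hp Hlam k Hk xi Hc.
  set (L := map p (seq 0 n)).
  assert (HL : probs L).
  { intros x Hx. apply in_map_iff in Hx. destruct Hx as [i [Hi Hin]]. subst.
    apply in_seq in Hin. apply Hp. lia. }
  assert (Hxi : xi ^ 2 = (INR k - lamL L) ^ 2 / lamL L).
  { unfold xi. change (lam p n) with (lamL L) in *.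
    unfold Rdiv. rewrite Rpow_mult_distr, pow_inv, <- (Rsqr_pow2 (sqrt (lamL L))), Rsqr_sqrt by lra.
    reflexivity. }
  change (lam p n) with (lamL L) in *. change (pmax p n) with (pmaxL L) in *.
  rewrite bernoulli_sum_tail_expect. fold L. rewrite Hxi in *.
  exact (relative_tail_bound_all (length L) L (le_n _) HL Hlam k Hk Hc).
Qed.
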